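(* Let $G$ be a connected graph with $\lambda(G)=\sigma(G)=k\geq 1$. Then there exist vertex-disjoint connected graphs $G_1,G_2$ and a set $K$ of $k$ edges, each joining a vertex of $G_1$ to a vertex of $G_2$, such that $G=G_1\ast_K G_2$, and each $G_i$ satisfies exactly one of: (i) $G_i$ has one vertex and no edges; (ii) $k\leq\sigma(G_i)<\lambda(G_i)$; (iii) $k<\sigma(G_i)=\lambda(G_i)$; (iv) $\sigma(G_i)=\lambda(G_i)=k$.
   Context: Graphs may have multiple edges. $\lambda(H)$ is the edge connectivity of $H$ and $\sigma(H)$ the maximum number of pairwise edge-disjoint spanning trees of $H$. For vertex-disjoint graphs $G_1=(V_1,E_1)$, $G_2=(V_2,E_2)$ and a set $K$ of edges each with one end in $V_1$ and one in $V_2$, the $K$-join $G_1\ast_K G_2$ has vertex set $V_1\cup V_2$ and edge set $E_1\cup E_2\cup K$. *)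

(* An ambient "edge structure" is given by finite types V (vertices),
   E (edge names) and ends : E -> V * V (the two endpoints of each edge).
   A (multi)graph is a pair (A, F) of a vertex set A : {set V} and an edge
   set F : {set E} such that every edge of F has both ends in A. *)
From HB Require Import structures.
From mathcomp Require Import all_boot.
Set Implicit Arguments. Unset Strict Implicit. Unset Printing Implicit Defensive.

Section MultiGraph.
Variables (V E : finType) (ends : E -> V * V).

Definition loopless : bool := [forall e, (ends e).1 != (ends e).2].

Definition is_graph (A : {set V}) (F : {set E}) : bool :=
  [forall e in F, ((ends e).1 \in A) && ((ends e).2 \in A)].

Definition adjF (F : {set E}) : rel V :=
  fun x y => [exists e in F, (ends e == (x, y)) || (ends e == (y, x))].

Definition connectedG (A : {set V}) (F : {set E}) : bool :=
  [forall x in A, forall y in A, connect (adjF F) x y].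

Definition cut (F : {set E}) (X : {set V}) : {set E} :=
  [set e in F | ((ends e).1 \in X) != ((ends e).2 \in X)].

Definition lambda (A : {set V}) (F : {set E}) : nat :=
  if (#|A| <= 1)%N then 0%N else
  \big[minn/#|E|]_(X : {set V} | (X \subset A) && (X != set0) && (X != A))
     #|cut F X|.

Definition acyclic (T : {set E}) : bool :=
  [forall e in T, ~~ connect (adjF (T :\ e)) (ends e).1 (ends e).2].

Definition spanning_tree (A : {set V}) (F : {set E}) (T : {set E}) : bool :=
  [&& T \subset F, connectedG A T & acyclic T].

Definition has_disjoint_trees (A : {set V}) (F : {set E}) (t : nat) : bool :=
  [exists Ts : {ffun 'I_t -> {set E}},
     [forall i, spanning_tree A F (Ts i)] &&
     [forall i, forall j, (i != j) ==> [disjoint Ts i & Ts j]]].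

(* For graphs with >= 2 vertices every spanning tree has an edge, so this
   number is at most #|E| and the bounded max below is exact. *)
Definition sigma (A : {set V}) (F : {set E}) : nat :=
  \max_(t < #|E|.+1 | has_disjoint_trees A F t) t.

Definition case_i (A : {set V}) (F : {set E}) : bool :=
  (#|A| == 1%N) && (F == set0).
Definition case_ii (k : nat) (A : {set V}) (F : {set E}) : bool :=
  (k <= sigma A F < lambda A F)%N.
Definition case_iii (k : nat) (A : {set V}) (F : {set E}) : bool :=
  (k < sigma A F)%N && (sigma A F == lambda A F).
Definition case_iv (k : nat) (A : {set V}) (F : {set E}) : bool :=
  (sigma A F == lambda A F) && (lambda A F == k).

Definition exactly_one_case (k : nat) (A : {set V}) (F : {set E}) : bool :=
  (case_i A F + case_ii k A F + case_iii k A F + case_iv k A F == 1)%N.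

End MultiGraph.

From HB Require Import structures.
From mathcomp Require Import all_boot.
Set Implicit Arguments. Unset Strict Implicit. Unset Printing Implicit Defensive.

(* Let G have lambda(G) = sigma(G) = k >= 1.  Pick a minimum
   edge cut delta(X) of G, so |delta(X)| = k, and k pairwise edge-disjoint
   spanning trees T_1, ..., T_k of G.  Every spanning tree crosses every cut,
   and the trees are disjoint, so the crossing edges give an injection from
   the trees into delta(X); since both sides have k elements, each tree T_i
   crosses delta(X) in exactly one edge.  Hence T_i restricted to G[X] is
   still connected, so G[X] (and likewise G[V \ X]) has k edge-disjoint
   spanning trees: k <= sigma(G[X]) <= lambda(G[X]).  Together with the fact
   that a one-vertex loopless graph has no edge, this chain of inequalities
   says that exactly one of the alternatives (i)-(iv) holds for G[X].  Then
   G = G[X] *_K G[V \ X] with K = delta(X). *)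

Lemma big_selective (R : Type) (op : R -> R -> R) (idx : R) (I : finType)
    (P : pred I) (F : I -> R) :
  (forall x y, op x y = x \/ op x y = y) ->
  \big[op/idx]_(i | P i) F i = idx \/
  exists2 i, P i & \big[op/idx]_(i | P i) F i = F i.
Proof.
move=> op_sel; elim/big_ind: _ => [|x y Hx Hy|i Pi]; [by left| |by right; exists i].
by have [->|->] := op_sel x y.
Qed.

Lemma minn_selective (m n : nat) : minn m n = m \/ minn m n = n.
Proof. by rewrite /minn; case: ltnP; [left|right]. Qed.

Lemma maxn_selective (m n : nat) : maxn m n = m \/ maxn m n = n.
Proof. by rewrite /maxn; case: ltnP; [right|left]. Qed.

Lemma bigmin_le (I : finType) (P : pred I) (F : I -> nat) (d : nat) (i : I) :
  P i -> \big[minn/d]_(j | P j) F j <= F i.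
Proof.
move=> Pi; rewrite -big_filter.
have : i \in [seq j <- index_enum I | P j] by rewrite mem_filter Pi mem_index_enum.
elim: (filter _ _) => // x r IH; rewrite inE big_cons => /predU1P[<-|/IH].
  exact: geq_minl.
by rewrite geq_min => ->; rewrite orbT.
Qed.

Lemma exactly_one_of_chain (k s l : nat) : k <= s <= l ->
  (k <= s < l) + ((k < s) && (s == l)) + ((s == l) && (l == k)) = 1.
Proof.
case/andP=> ks sl; have [s_lt_l|l_lt_s|<-] := ltngtP s l.
- by rewrite ks !andbF.
- by rewrite leqNgt l_lt_s in sl.
- by rewrite andbF andbT /=; case: ltngtP ks.
Qed.

Section MultiGraphFacts.
Variables (V E : finType) (ends : E -> V * V).
Local Notation adj := (adjF ends).

(* The edges with both ends in X: the edge set of the induced subgraph G[X]. *)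
Definition inside (X : {set V}) : {set E} :=
  [set e | ((ends e).1 \in X) && ((ends e).2 \in X)].

Lemma adjF_sym (F : {set E}) : symmetric (adj F).
Proof.
by move=> x y; apply/existsP/existsP => -[f /andP[fF ef]]; exists f; rewrite fF orbC.
Qed.

Lemma connect_adjF_sym (F : {set E}) (x y : V) :
  connect (adj F) x y = connect (adj F) y x.
Proof. exact: (sym_connect_sym (adjF_sym F)). Qed.

Lemma connect_adjF_sub (F F' : {set E}) (x y : V) : F \subset F' ->
  connect (adj F) x y -> connect (adj F') x y.
Proof.
move=> sFF'; apply: connect_sub => u w /existsP[f /andP[fF ef]].
by apply: connect1; apply/existsP; exists f; rewrite (subsetP sFF' _ fF).
Qed.

Lemma connectedG_sub (A : {set V}) (F F' : {set E}) : F \subset F' ->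
  connectedG ends A F -> connectedG ends A F'.
Proof.
move=> sFF' /forall_inP connF; apply/forall_inP => x xA; apply/forall_inP => y yA.
by apply: connect_adjF_sub sFF' _; move/forall_inP: (connF x xA); apply.
Qed.

Lemma acyclic_sub (S T : {set E}) : S \subset T -> acyclic ends T -> acyclic ends S.
Proof.
move=> sST /forall_inP acT; apply/forall_inP => e eS; apply: contra (acT e (subsetP sST _ eS)).
by apply: connect_adjF_sub; apply: setSD.
Qed.

Lemma adjF_inside (F : {set E}) (Y : {set V}) (p q : V) :
  adj F p q -> p \in Y -> q \in Y -> adj (F :&: inside Y) p q.
Proof.
move=> /existsP[f /andP[fF ef]] pY qY; apply/existsP; exists f; rewrite ef !inE fF.
by case/orP: ef => /eqP -> /=; rewrite pY qY.
Qed.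

Lemma inside_closed (F : {set E}) (Y : {set V}) : closed (adj (F :&: inside Y)) Y.
Proof.
move=> x y /existsP[f /andP[]]; rewrite !inE => /andP[_ /andP[f1 f2]].
by case/orP => /eqP ef; rewrite ef /= in f1 f2; rewrite f1 f2.
Qed.

Lemma walk_crosses (T : {set E}) (Y : {set V}) (y z : V) :
  connect (adj T) y z -> y \in Y -> z \notin Y -> exists f, f \in cut ends T Y.
Proof.
move=> yz yY zY; apply/existsP; apply: contraT => /existsPn no_cross.
have Y_closed : closed (adj T) Y.
  move=> x w /existsP[f /andP[fT ef]]; have := no_cross f.
  by rewrite inE fT /= negbK; case/orP: ef => /eqP -> /eqP.
by have := closed_connect Y_closed yz; rewrite yY (negbTE zY).
Qed.

(* If the only T-adjacency leaving X is a--b (a in X, b outside), then every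
   vertex of X reachable from a in T is reachable from a inside T[X]: a walk
   that leaves X through b can only come back through the same edge. *)
Lemma connect_restrict (T : {set E}) (X : {set V}) (a b : V) :
    a \in X -> b \notin X ->
    (forall p q, adj T p q -> p \in X -> q \notin X -> p = a /\ q = b) ->
  forall x, x \in X -> connect (adj T) a x -> connect (adj (T :&: inside X)) a x.
Proof.
move=> aX bX only_ab x xX ax.
set TX := T :&: inside X; set TN := T :&: inside (~: X).
have stays_out p : connect (adj TN) b p -> p \notin X.
  move=> bp; have := closed_connect (@inside_closed T (~: X)) bp.
  by rewrite !inE bX => <-.
pose U := [set v | connect (adj TX) a v || connect (adj TN) b v].
have U_step p q : adj T p q -> p \in U -> q \in U.
  move=> pq; rewrite !inE.
  have [pX|pX] := boolP (p \in X); have [qX|qX] := boolP (q \in X).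
  - case/orP=> [ap|/stays_out]; last by rewrite pX.
    by rewrite (connect_trans ap (connect1 (adjF_inside pq pX qX))).
  - by have [_ ->] := only_ab p q pq pX qX; rewrite connect0 orbT.
  - have qp : adj T q p by rewrite adjF_sym.
    by have [-> _] := only_ab q p qp qX pX; rewrite connect0.
  - case/orP=> [/(closed_connect (@inside_closed T X))|bp]; first by rewrite aX (negbTE pX).
    have pq' : adj TN p q by apply: adjF_inside; rewrite ?inE.
    by rewrite (connect_trans bp (connect1 pq')) orbT.
have U_closed : closed (adj T) U.
  by move=> p q pq; apply/idP/idP; apply: U_step; rewrite // adjF_sym.
have : x \in U by rewrite -(closed_connect U_closed ax) inE connect0.
by rewrite inE => /orP[//|/stays_out]; rewrite xX.
Qed.

Lemma has_disjoint_treesP (A : {set V}) (F : {set E}) (t : nat) :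
  reflect (exists Ts : {ffun 'I_t -> {set E}},
             (forall i, spanning_tree ends A F (Ts i)) /\
             (forall i j, i != j -> [disjoint Ts i & Ts j]))
          (has_disjoint_trees ends A F t).
Proof.
apply: (iffP existsP) => -[Ts].
  case/andP=> /forallP trees /forallP disj; exists Ts; split=> // i j.
  by move/forallP: (disj i) => /(_ j) /implyP.
case=> trees disj; exists Ts; apply/andP; split; apply/forallP => // i.
by apply/forallP => j; apply/implyP; apply: disj.
Qed.

Lemma tree_crossing_edges (A : {set V}) (F : {set E}) (t : nat)
    (Ts : 'I_t -> {set E}) (Y : {set V}) (y z : V) :
    (forall i, spanning_tree ends A F (Ts i)) ->
    (forall i j, i != j -> [disjoint Ts i & Ts j]) ->
    Y \subset A -> y \in Y -> z \in A -> z \notin Y ->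
  exists g : 'I_t -> E,
    [/\ injective g, forall i, g i \in Ts i & forall i, g i \in cut ends F Y].
Proof.
move=> trees disj sYA yY zA zY.
have cross i : exists f, f \in Ts i /\ f \in cut ends F Y.
  have /and3P[sTF /forall_inP connT _] := trees i.
  have yz : connect (adj (Ts i)) y z.
    by move/forall_inP: (connT y (subsetP sYA _ yY)); apply.
  have [f] := walk_crosses yz yY zY.
  by rewrite !inE => /andP[fT cf]; exists f; rewrite !inE fT (subsetP sTF _ fT).
have [g gP] := fin_all_exists cross.
exists g; split=> [i j gij|i|i]; [|exact: (proj1 (gP i))|exact: (proj2 (gP i))].
apply: contraTeq (proj1 (gP i)) => /disj /disjointFl -> //.
by rewrite gij (proj1 (gP j)).
Qed.

Lemma trees_le_cut (A : {set V}) (F : {set E}) (t : nat) (Y : {set V}) :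
    has_disjoint_trees ends A F t -> Y \subset A -> Y != set0 -> Y != A ->
  t <= #|cut ends F Y|.
Proof.
move=> /has_disjoint_treesP[Ts [trees disj]] sYA /set0Pn[y yY] nYA.
have [_ [z zA zY]] : Y \subset A /\ exists2 z, z \in A & z \notin Y.
  by apply/properP; rewrite properEneq nYA sYA.
have [g [g_inj _ g_cut]] := tree_crossing_edges trees disj sYA yY zA zY.
rewrite -[t]card_ord -cardsT -(card_imset _ g_inj).
by apply: subset_leq_card; apply/subsetP => f /imsetP[i _ ->].
Qed.

Lemma sigma_le_lambda (A : {set V}) (F : {set E}) :
  1 < #|A| -> sigma ends A F <= lambda ends A F.
Proof.
move=> A_gt1; rewrite /lambda ifN -?ltnNge //; apply/bigmax_leqP => t trees.
elim/big_ind: _ => [|m n|Y /andP[/andP[]]]; first by rewrite -ltnS ltn_ord.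
  by rewrite leq_min => -> ->.
exact: trees_le_cut trees.
Qed.

Lemma sigma_ge (A : {set V}) (F : {set E}) (t : nat) :
  has_disjoint_trees ends A F t -> t <= #|E| -> t <= sigma ends A F.
Proof. by move=> trees t_le; apply: (leq_bigmax_cond (Ordinal (t_le : t < #|E|.+1))). Qed.

Lemma loopless_single_vertex (A : {set V}) (F : {set E}) :
  loopless ends -> is_graph ends A F -> #|A| = 1 -> F = set0.
Proof.
move=> /forallP no_loop /forall_inP FA /eqP/cards1P[v Av]; apply/setP => e.
rewrite inE; apply/negbTE/negP => /FA; rewrite Av !in_set1 => /andP[/eqP e1 /eqP e2].
by have := no_loop e; rewrite e1 e2 eqxx.
Qed.

Lemma exactly_one_case_of_trees (k : nat) (A : {set V}) (F : {set E}) :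
    loopless ends -> is_graph ends A F -> A != set0 -> 0 < k -> k <= #|E| ->
    has_disjoint_trees ends A F k ->
  exactly_one_case ends k A F.
Proof.
move=> no_loop AF A0 k_gt0 k_le trees.
rewrite /exactly_one_case /case_i /case_ii /case_iii /case_iv.
have [A1|A_ne1] := eqVneq #|A| 1.
  rewrite (loopless_single_vertex no_loop AF A1) /lambda A1 eqxx /=.
  by case: (sigma _ _ _) => [|s]; rewrite ?ltn0 ?andbF (eq_sym 0 k) (gtn_eqF k_gt0).
have A_gt1 : 1 < #|A| by rewrite ltn_neqAle eq_sym A_ne1 card_gt0.
rewrite /= add0n; apply/eqP/exactly_one_of_chain.
by rewrite sigma_ge // sigma_le_lambda.
Qed.

Lemma tight_cut_unique_crossing (A : {set V}) (F : {set E}) (k : nat)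
    (Ts : 'I_k -> {set E}) (X : {set V}) :
    (forall i, spanning_tree ends A F (Ts i)) ->
    (forall i j, i != j -> [disjoint Ts i & Ts j]) ->
    X \subset A -> X != set0 -> X != A -> #|cut ends F X| = k ->
  forall i, exists2 e, e \in cut ends F X &
    forall f, f \in Ts i -> f \in cut ends F X -> f = e.
Proof.
move=> trees disj sXA /set0Pn[x xX] nXA cutX i.
have [_ [z zA zX]] : X \subset A /\ exists2 z, z \in A & z \notin X.
  by apply/properP; rewrite properEneq nXA sXA.
have [g [g_inj g_tree g_cut]] := tree_crossing_edges trees disj sXA xX zA zX.
have g_onto : g @: setT = cut ends F X.
  apply/eqP; rewrite eqEcard (card_imset _ g_inj) cardsT card_ord cutX leqnn andbT.
  by apply/subsetP => f /imsetP[j _ ->].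
exists (g i) => // f fT; rewrite -g_onto => /imsetP[j _ fj]; subst f.
have [->//|ji] := eqVneq j i.
have ij : i != j by rewrite eq_sym.
by have := g_tree j; rewrite (disjointFr (disj i j ij) fT).
Qed.

Lemma cut_endpoints (F : {set E}) (X : {set V}) (e : E) : e \in cut ends F X ->
  exists a b, [/\ a \in X, b \notin X & ends e = (a, b) \/ ends e = (b, a)].
Proof.
rewrite inE => /andP[_]; case: (ends e) => u w /=.
have [uX|uX] := boolP (u \in X) => wX.
  by exists u, w; split=> //; left.
by exists w, u; split=> //; [move: wX; case: (w \in X) | right].
Qed.

Lemma restrict_spanning_tree (A : {set V}) (F T : {set E}) (X : {set V}) (e : E) :
    spanning_tree ends A F T -> X \subset A -> e \in cut ends F X ->
    (forall f, f \in T -> f \in cut ends F X -> f = e) ->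
  spanning_tree ends X (F :&: inside X) (T :&: inside X).
Proof.
case/and3P=> sTF /forall_inP connT acT sXA e_cut only_e.
rewrite /spanning_tree setSI // (acyclic_sub (subsetIl _ _) acT) andbT.
have [a [b [aX bX e_ab]]] := cut_endpoints e_cut.
have only_ab p q : adj T p q -> p \in X -> q \notin X -> p = a /\ q = b.
  case/existsP=> f /andP[fT ef] pX qX.
  have f_cut : f \in cut ends F X.
    by rewrite inE (subsetP sTF _ fT); case/orP: ef => /eqP -> /=; rewrite pX (negPf qX).
  move: ef; rewrite (only_e f fT f_cut).
  by case/orP=> /eqP; case: e_ab => -> [? ?]; subst;
    rewrite ?(negPf bX) ?(negPf qX) in pX aX *.
have reach y : y \in X -> connect (adj (T :&: inside X)) a y.
  move=> yX; apply: (connect_restrict aX bX only_ab yX).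
  by move/forall_inP: (connT a (subsetP sXA _ aX)); apply; apply: (subsetP sXA).
apply/forall_inP => x xX; apply/forall_inP => y yX.
by rewrite (connect_trans _ (reach y yX)) // connect_adjF_sym reach.
Qed.

Lemma tight_cut_side (A : {set V}) (F : {set E}) (k : nat)
    (Ts : 'I_k -> {set E}) (X : {set V}) :
    loopless ends -> 0 < k ->
    (forall i, spanning_tree ends A F (Ts i)) ->
    (forall i j, i != j -> [disjoint Ts i & Ts j]) ->
    X \subset A -> X != set0 -> X != A -> #|cut ends F X| = k ->
  connectedG ends X (F :&: inside X) /\ exactly_one_case ends k X (F :&: inside X).
Proof.
move=> no_loop k_gt0 trees disj sXA X0 nXA cutX.
have restricted i : spanning_tree ends X (F :&: inside X) (Ts i :&: inside X).
  have [e e_cut only_e] := tight_cut_unique_crossing trees disj sXA X0 nXA cutX i.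
  exact: restrict_spanning_tree (trees i) sXA e_cut only_e.
have trees_X : has_disjoint_trees ends X (F :&: inside X) k.
  apply/has_disjoint_treesP; exists [ffun i => Ts i :&: inside X].
  split=> [i|i j ij]; rewrite !ffunE //.
  by apply: disjointWl (subsetIl _ _) (disjointWr (subsetIl _ _) (disj i j ij)).
split; first by have /and3P[sTF connT _] := restricted (Ordinal k_gt0); exact: connectedG_sub connT.
apply: exactly_one_case_of_trees trees_X => //; last by rewrite -cutX max_card.
by apply/forall_inP => e; rewrite !inE => /andP[].
Qed.

(* lambda is attained by a nonempty proper cut (also when the big min falls
   back to its default #|E|, realised by any singleton cut). *)
Lemma tight_cut_exists (A : {set V}) (F : {set E}) : 1 < #|A| ->
  exists X : {set V}, [/\ X \subset A, X != set0, X != A & #|cut ends F X| = lambda ends A F].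
Proof.
move=> A_gt1; rewrite /lambda ifN -?ltnNge //.
have [v vA] : exists v, v \in A by apply/card_gt0P; apply: ltnW.
have v_cut : ([set v] \subset A) && ([set v] != set0) && ([set v] != A).
  rewrite sub1set vA -card_gt0 cards1 /=.
  by apply: contraTneq A_gt1 => <-; rewrite cards1.
have [min_E|[X /andP[/andP[sXA X0] nXA] ->]] :=
  @big_selective _ minn #|E| {set V} (fun X => (X \subset A) && (X != set0) && (X != A))
    (fun X => #|cut ends F X|) minn_selective; last by exists X.
exists [set v]; split; try by case/andP: v_cut => /andP[].
by apply/eqP; rewrite min_E eqn_leq max_card -{1}min_E bigmin_le.
Qed.

Lemma disjoint_trees_sigma (A : {set V}) (F : {set E}) :
  0 < sigma ends A F -> has_disjoint_trees ends A F (sigma ends A F).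
Proof.
rewrite /sigma; have [->//|[t trees ->]] :=
  @big_selective _ maxn 0 'I_#|E|.+1 (has_disjoint_trees ends A F) val maxn_selective.
by move=> _.
Qed.

Lemma cut_complement (X : {set V}) : cut ends setT (~: X) = cut ends setT X.
Proof.
by apply/setP => e; rewrite !inE; case: ((ends e).1 \in X); case: ((ends e).2 \in X).
Qed.

Lemma is_graph_inside (X : {set V}) : is_graph ends X (inside X).
Proof. by apply/forall_inP => e; rewrite inE. Qed.

Lemma cut_sides (F : {set E}) (X : {set V}) (e : E) : e \in cut ends F X ->
  ((ends e).1 \in X /\ (ends e).2 \in ~: X) \/ ((ends e).1 \in ~: X /\ (ends e).2 \in X).
Proof.
by rewrite !inE => /andP[_]; case: ((ends e).1 \in X); case: ((ends e).2 \in X); [|left|right|].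
Qed.

Lemma edge_partition (X : {set V}) :
  inside X :|: inside (~: X) :|: cut ends setT X = setT.
Proof.
by apply/setP => e; rewrite !inE; case: ((ends e).1 \in X); case: ((ends e).2 \in X).
Qed.
End MultiGraphFacts.
Unset Implicit Arguments. Set Strict Implicit. Set Printing Implicit Defensive.


(* G1 and G2 are the subgraphs induced by the two sides of a minimum
   cut X, and K is the cut itself. *)
Theorem mainTheorem6 (V E : finType) (ends : E -> V * V) (k : nat) :
  loopless ends ->
  connectedG ends [set: V] [set: E] ->
  lambda ends [set: V] [set: E] = k ->
  sigma ends [set: V] [set: E] = k ->
  (1 <= k)%N ->
  exists (A1 A2 : {set V}) (F1 F2 K : {set E}),
    ((* G1 = (A1,F1) and G2 = (A2,F2) are vertex-disjoint connected graphs *)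
        is_graph ends A1 F1 /\ is_graph ends A2 F2 /\
        A1 != set0 /\ A2 != set0 /\
        [disjoint A1 & A2] /\
        connectedG ends A1 F1 /\ connectedG ends A2 F2 /\
        (* K is a set of k edges, each joining A1 to A2 *)
        #|K| = k /\
        (forall e, e \in K ->
           ((ends e).1 \in A1 /\ (ends e).2 \in A2) \/
           ((ends e).1 \in A2 /\ (ends e).2 \in A1)) /\
        (* G = G1 *_K G2 *)
        A1 :|: A2 = [set: V] /\ F1 :|: F2 :|: K = [set: E] /\
        (* each G_i satisfies exactly one of (i)-(iv) *)
        exactly_one_case ends k A1 F1 /\ exactly_one_case ends k A2 F2).
Proof.
move=> no_loop _ lambda_k sigma_k k_gt0.
have V_gt1 : 1 < #|[set: V]|.
  by rewrite ltnNge; apply: contraTN k_gt0; rewrite -lambda_k /lambda => ->.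
have [X [_ X0 nXT cutX]] := tight_cut_exists ends [set: E] V_gt1.
rewrite lambda_k in cutX.
have /has_disjoint_treesP[Ts [trees disj]] : has_disjoint_trees ends setT setT k.
  by rewrite -sigma_k disjoint_trees_sigma ?sigma_k.
have CX0 : ~: X != set0 by rewrite -setCT (inj_eq (@setC_inj _)).
have nCXT : ~: X != setT by rewrite -setC0 (inj_eq (@setC_inj _)).
have [conn1 case1] := tight_cut_side no_loop k_gt0 trees disj (subsetT X) X0 nXT cutX.
have cutCX : #|cut ends setT (~: X)| = k by rewrite cut_complement.
have [conn2 case2] := tight_cut_side no_loop k_gt0 trees disj (subsetT (~: X)) CX0 nCXT cutCX.
rewrite !setTI in conn1 case1 conn2 case2.
exists X, (~: X), (inside ends X), (inside ends (~: X)), (cut ends setT X).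
have disjX : [disjoint X & ~: X] by rewrite disjoints_subset setCK.
by do !split; rewrite ?setUCr ?edge_partition ?is_graph_inside //; apply: cut_sides.
Qed.
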